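(* Let $\mathcal A=\{G\in\mathcal G:\ \overline G\text{ is Abelian}\}$. The sets $\mathcal D=\{G\in\mathcal A:\ \overline G\text{ is divisible}\}$, $\mathcal T=\{G\in\mathcal A:\ \overline G\text{ is a torsion group}\}$ and $\mathcal F=\{G\in\mathcal A:\ \text{every finite Abelian group can be embedded into }\overline G\}$ are $G_\delta$ in $\mathcal A$.
   Context: Let $\mathbb N=\{1,2,3,\dots\}$. Equip $\mathbb N^{\mathbb N\times\mathbb N}$ with the product topology of the discrete topology on $\mathbb N$. Let $\mathcal G$ be the subspace consisting of those $A\in\mathbb N^{\mathbb N\times\mathbb N}$ that are the multiplication table of a group on the underlying set $\mathbb N$ whose identity element is $1$. For $G\in\mathcal G$, $\overline G$ denotes the group on $\mathbb N$ with multiplication table $G$. $\mathcal A$ carries the subspace topology. *)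

From HB Require Import structures.
From mathcomp Require Import all_boot all_order all_algebra all_fingroup.
From mathcomp Require Import all_classical topology borel_hierarchy.
Set Implicit Arguments. Unset Strict Implicit. Unset Printing Implicit Defensive.
Local Open Scope classical_set_scope.

(* The index set N = {1,2,3,...} is represented by Rocq's nat = {0,1,2,...}
   via the relabelling k <-> k+1; accordingly the identity element "1" of the
   paper is the number 0 here.  nat carries the discrete topology and the
   ambient space N^(N x N) is {ptws nat * nat -> nat}, the product topology. *)
Definition Space := {ptws (nat * nat) -> nat}.

Definition is_group_table (A : nat * nat -> nat) : Prop :=
  [/\ (forall a b c, A (A (a, b), c) = A (a, A (b, c))),
      (forall a, A (0%N, a) = a /\ A (a, 0%N) = a) &
      (forall a, exists b, A (a, b) = 0%N /\ A (b, a) = 0%N)].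

Definition calG : set Space := [set A | is_group_table A].

Definition gpow (A : nat * nat -> nat) (a n : nat) : nat :=
  iter n (fun x => A (x, a)) 0%N.

Definition is_abelian_table (A : nat * nat -> nat) : Prop :=
  forall a b, A (a, b) = A (b, a).

Definition calA : set Space := [set A | calG A /\ is_abelian_table A].

Definition is_divisible_table (A : nat * nat -> nat) : Prop :=
  forall (a n : nat), (0 < n)%N -> exists b, gpow A b n = a.

Definition is_torsion_table (A : nat * nat -> nat) : Prop :=
  forall a, exists2 n, (0 < n)%N & gpow A a n = 0%N.

Definition embeds_all_finite_abelian (A : nat * nat -> nat) : Prop :=
  forall gT : finGroupType, (forall x y : gT, (x * y)%g = (y * x)%g) ->
    exists f : gT -> nat, injective f /\
      (forall x y : gT, f (x * y)%g = A (f x, f y)).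

Definition calD : set Space := [set A | calA A /\ is_divisible_table A].
Definition calT : set Space := [set A | calA A /\ is_torsion_table A].
Definition calF : set Space := [set A | calA A /\ embeds_all_finite_abelian A].

From Pilot Require Import Defs.
From HB Require Import structures.
From mathcomp Require Import all_boot all_order all_algebra all_fingroup.
From mathcomp Require Import all_classical topology borel_hierarchy.
Set Implicit Arguments. Unset Strict Implicit. Unset Printing Implicit Defensive.
Local Open Scope classical_set_scope.

(* Each entry [A (x, y)] of a table is a locally constant function of [A], hence
   so is every power [gpow A b n], and "finitely many entries take prescribed
   values" is an open condition.  Divisibility and being torsion are countable
   conjunctions of countable disjunctions of such conditions.  By Cayley's
   theorem every finite abelian group is isomorphic to an abelian subgroup of
   some symmetric group on [0, n); there are countably many of these, and
   embedding a fixed finite group is a union, over the injective maps into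
   the carrier, of such conditions. *)

Lemma Gdelta_subspace_bigcap (T : topologicalType) (D : set T) (I : countType)
    (P : set I) (U : I -> set T) :
  (forall i, P i -> open (U i)) ->
  Gdelta (D `&` \bigcap_(i in P) U i : set (subspace D)).
Proof.
move=> oU; pose V i := if `[< P i >] then U i else setT.
exists (fun k => D `&` if unpickle k is Some i then V i else setT).
  move=> k; apply: openI; first exact: open_subspaceT.
  apply: open_subspaceW; case: (unpickle k) => [i|]; last exact: openT.
  by rewrite /V; case: asboolP => [/oU|_] //; exact: openT.
apply/seteqP; split=> [x [Dx Ux] k _|x DUx].
  split=> //; case: (unpickle k) => // i.
  by rewrite /V; case: asboolP => // /Ux.
split; first by case: (DUx 0%N).
move=> i Pi; case: (DUx (pickle i)) => // _.
by rewrite pickleK /V; case: asboolP.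
Qed.

Lemma nbhs_eval (A0 : Defs.Space) (t : nat * nat) :
  \forall A \near A0, A t = A0 t.
Proof.
have := (@pointwise_cvgP _ _ (nbhs A0) A0 _).1 (@cvg_id _ (nbhs A0)) t.
move=> /(_ _) /(_ [set A0 t]); apply.
by rewrite nbhs_principalE; apply/principal_filterP.
Qed.

Lemma nbhs_eval_fin (F : finType) (t : F -> nat * nat) (A0 : Defs.Space) :
  \forall A \near A0, forall q, A (t q) = A0 (t q).
Proof. exact: filter_forall (fun q => nbhs_eval A0 (t q)). Qed.

Lemma nbhs_gpow (A0 : Defs.Space) (b n : nat) :
  \forall A \near A0, gpow A b n = gpow A0 b n.
Proof.
elim: n => [|n IHn]; first by near=> A.
near=> A; rewrite /gpow /= -/(gpow A b n) -/(gpow A0 b n).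
have -> : gpow A b n = gpow A0 b n by near: A.
by near: A; exact: nbhs_eval.
Unshelve. all: by end_near.
Qed.

Definition gpow_set (b n c : nat) : set Defs.Space := [set A | gpow A b n = c].

Lemma open_gpow_set b n c : open (gpow_set b n c).
Proof.
rewrite openE => A0 powA0; apply: filterS (nbhs_gpow A0 b n) => A eq_pow.
by rewrite /gpow_set /= eq_pow.
Qed.

Definition hom_set (gT : finGroupType) (G : {set gT}) (f : gT -> nat) :
  set Defs.Space :=
  [set A | {in G &, {morph f : x y / (x * y)%g >-> A (x, y)}}].

Lemma open_hom_set (gT : finGroupType) (G : {set gT}) f : open (hom_set G f).
Proof.
rewrite openE => A0 homA0.
apply: filterS (nbhs_eval_fin (fun q : gT * gT => (f q.1, f q.2)) A0).
by move=> A eqA x y xG yG; rewrite homA0 // (eqA (x, y)).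
Qed.

Definition embeds_set (gT : finGroupType) (G : {set gT}) : set Defs.Space :=
  \bigcup_(f in [set f : gT -> nat | {in G &, injective f}]) hom_set G f.

Lemma open_embeds_set (gT : finGroupType) (G : {set gT}) : open (embeds_set G).
Proof. by apply: bigcup_open => f _; exact: open_hom_set. Qed.

Section RegularRepresentation.
Variable gT : finGroupType.

(* Right multiplication, since MathComp composes permutations left to right. *)
Definition regular_fun (g : gT) (i : 'I_#|gT|) : 'I_#|gT| :=
  enum_rank (enum_val i * g)%g.

Lemma regular_fun_inj g : injective (regular_fun g).
Proof. by move=> i j /enum_rank_inj /mulIg /enum_val_inj. Qed.

Definition regular_perm g : {perm 'I_#|gT|} := perm (@regular_fun_inj g).

Lemma regular_permM : {morph regular_perm : g h / (g * h)%g}.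
Proof.
move=> g h; apply/permP => i.
by rewrite permM !permE /regular_fun enum_rankK mulgA.
Qed.

Lemma regular_perm_inj : injective regular_perm.
Proof.
move=> g h /permP /(_ (enum_rank 1%g)); rewrite !permE /regular_fun enum_rankK.
by rewrite !mul1g => /enum_rank_inj.
Qed.

Definition regular_morphism : {morphism [set: gT] >-> {perm 'I_#|gT|}} :=
  Morphism (in2W regular_permM).

End RegularRepresentation.

Lemma calDE :
  calD = calA `&` \bigcap_(p : nat * nat) \bigcup_b gpow_set b p.2.+1 p.1.
Proof.
apply/seteqP; split=> [A [calA_A divA]|A [calA_A rootA]]; split=> //.
  by move=> [a n] _; have [b powb] := divA a n.+1 isT; exists b.
by move=> a [|n] // _; have [b _ powb] := rootA (a, n) I; exists b.
Qed.

Lemma calTE : calT = calA `&` \bigcap_a \bigcup_n gpow_set a n.+1 0%N.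
Proof.
apply/seteqP; split=> [A [calA_A torA]|A [calA_A torA]]; split=> //.
  by move=> a _; have [[|n] //] := torA a; exists n.
by move=> a; have [n _ pown] := torA a I; exists n.+1.
Qed.

Lemma embeds_abelian_group (A : nat * nat -> nat) (gT : finGroupType)
    (G : {group gT}) :
  embeds_all_finite_abelian A -> abelian G -> embeds_set G A.
Proof.
move=> embA abG.
have commG (x y : subg_of G) : (x * y)%g = (y * x)%g.
  by apply: subg_inj; exact: (centsP abG) _ (subgP x) _ (subgP y).
have [f [f_inj f_hom]] := embA _ commG.
exists (f \o subg G) => [x y xG yG /f_inj /(congr1 sgval)|x y xG yG /=].
  by rewrite !subgK.
by rewrite -f_hom subgM.
Qed.

Lemma embeds_all_finite_abelian_of_perm (A : nat * nat -> nat) :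
  (forall n (G : {group {perm 'I_n}}), abelian G -> embeds_set G A) ->
  embeds_all_finite_abelian A.
Proof.
move=> embA gT commT; set reg := regular_morphism gT.
have abT : abelian [set: gT]%SET by apply/centsP => x _ y _; exact: commT.
have [f f_inj f_hom] := embA _ _ (morphim_abelian reg abT).
have reg_mem g : reg g \in (reg @* [set: gT]%SET)%g by rewrite mem_morphim ?inE.
exists (fun g => f (reg g)); split=> [g h /f_inj|g h].
  by rewrite !reg_mem => /(_ isT isT) /regular_perm_inj.
by rewrite morphM ?inE //; exact: f_hom (reg_mem g) (reg_mem h).
Qed.

Lemma calFE : calF = calA `&`
  \bigcap_(G in [set G : {n & {group {perm 'I_n}}} | abelian (tagged G)])
    embeds_set (tagged G).
Proof.
apply/seteqP; split=> [A [calA_A embA]|A [calA_A embA]]; split=> //.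
  by move=> [n G] /= abG; exact: embeds_abelian_group.
apply: embeds_all_finite_abelian_of_perm => n G abG.
exact: (embA (existT _ n G)).
Qed.

Theorem proposition8p5 :
  [/\ Gdelta (calD : set (subspace calA)),
      Gdelta (calT : set (subspace calA)) &
      Gdelta (calF : set (subspace calA))].
Proof.
split; [rewrite calDE | rewrite calTE | rewrite calFE];
  apply: Gdelta_subspace_bigcap => i _.
- by apply: bigcup_open => b _; exact: open_gpow_set.
- by apply: bigcup_open => n _; exact: open_gpow_set.
- exact: open_embeds_set.
Qed.
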